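(* Let $V$ be the value function defined in the context, and for $\mathbf Q\in\mathcal Q$, $\mathbf u,\mathbf v\in\mathcal U$ let $J(\mathbf Q,\mathbf u)=g(\mathbf Q,\mathbf u)+\mathbb E[V(\mathbf Q')]$ and $\Delta_{\mathbf u,\mathbf v}(\mathbf Q)=J(\mathbf Q,\mathbf u)-J(\mathbf Q,\mathbf v)$. Then for all $\mathbf u,\mathbf v\in\mathcal U$: (1) if $u_0=m\in\mathcal M_0$, then $\Delta_{\mathbf u,\mathbf v}(\mathbf Q)$ is monotonically non-increasing in $Q_{0,m}$ and in $Q_{n,m}$ for every $n\in\mathcal N_m$ (all other components of $\mathbf Q$ held fixed); (2) if $u_n=m\in\mathcal M_n$ for some $n\in\mathcal N^+$, then $\Delta_{\mathbf u,\mathbf v}(\mathbf Q)$ is monotonically non-increasing in $Q_{n,m}$ (all other components of $\mathbf Q$ held fixed).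
   Context: Model. Let $N\ge 1$, $\mathcal N=\{0,1,\dots,N\}$ (base station $0$ is the macro base station, MBS) and $\mathcal N^+=\{1,\dots,N\}$ (small base stations, SBSs). Let $\mathcal M=\{1,\dots,M\}$ be the set of contents. For each $n\in\mathcal N$ let $\mathcal M_n\subseteq\mathcal M$ be the set of contents cached at BS $n$, with $\mathcal M_0=\mathcal M$; put $\tilde{\mathcal M}_n=\mathcal M_n\cup\{0\}$ and $\mathcal N_m=\{n\in\mathcal N^+: m\in\mathcal M_n\}$. Powers $p(n,m)\ge 0$ are given for $n\in\mathcal N$, $m\in\mathcal M_n$, and $p(n,0)=0$. A weight $w\ge 0$ is fixed. The feasible action space is $\mathcal U=\{\mathbf u=(u_n)_{n\in\mathcal N}: u_n\in\tilde{\mathcal M}_n\ \forall n,\ u_0\sum_{n\in\mathcal N^+}u_n=0\}$. A state is $\mathbf Q=(Q_{n,m})_{n\in\mathcal N,m\in\mathcal M_n}$ with $Q_{n,m}\in\mathcal Q_{n,m}=\{0,1,\dots,N_{n,m}\}$ for given positive integers $N_{n,m}$; $\mathcal Q=\prod_{n\in\mathcal N}\prod_{m\in\mathcal M_n}\mathcal Q_{n,m}$. Arrivals $A_{n,m}$ ($n\in\mathcal N$, $m\in\mathcal M$) are mutually independent nonnegative-integer random variables with fixed distributions, i.i.d. across time slots; $\tilde A_{0,m}=A_{0,m}+\sum_{n\in\mathcal N^+\setminus\mathcal N_m}A_{n,m}$. Given state $\mathbf Q$ and action $\mathbf u$, the next state $\mathbf Q'$ is $Q'_{0,m}=\min\{\mathbf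 1(u_0\neq m)Q_{0,m}+\tilde A_{0,m},N_{0,m}\}$ for $m\in\mathcal M_0$ and $Q'_{n,m}=\min\{\mathbf 1(u_0\neq m\text{ and }u_n\neq m)Q_{n,m}+A_{n,m},N_{n,m}\}$ for $n\in\mathcal N^+$, $m\in\mathcal M_n$; $\mathbb E$ denotes expectation over the arrivals. The per-stage cost is $g(\mathbf Q,\mathbf u)=d(\mathbf Q)+w\,p(\mathbf u)$ with $d(\mathbf Q)=\sum_{n\in\mathcal N}\sum_{m\in\mathcal M_n}Q_{n,m}$ and $p(\mathbf u)=\sum_{n\in\mathcal N}p(n,u_n)$. Value function. Fix a reference state $\mathbf Q^\dagger\in\mathcal Q$. Relative value iteration: $V_0\equiv 0$, $J_{l+1}(\mathbf Q,\mathbf u)=g(\mathbf Q,\mathbf u)+\mathbb E[V_l(\mathbf Q')]$, and $V_{l+1}(\mathbf Q)=\min_{\mathbf u\in\mathcal U}J_{l+1}(\mathbf Q,\mathbf u)-\min_{\mathbf u\in\mathcal U}J_{l+1}(\mathbf Q^\dagger,\mathbf u)$ for $l\ge0$. It is assumed (standing assumption of the paper, guaranteed under its unichain conditions) that $V_l$ converges pointwise to a function $V:\mathcal Q\to\mathbb R$; this $V$ is the value function, which solves the Bellman equation $\theta+V(\mathbf Q)=\min_{\mathbf u\in\mathcal U}\{g(\mathbf Q,\mathbf u)+\mathbb E[V(\mathbf Q')]\}$ for all $\mathbf Q$. *)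

From mathcomp Require Import all_boot.
From Stdlib Require Import Reals.

Set Implicit Arguments.
Unset Strict Implicit.
Unset Printing Implicit Defensive.

(* Base stations: 'I_N.+1 (ord0 = MBS, the others = SBSs 1..N).
   Contents: 'I_M, where k : 'I_M stands for content k+1 in {1,...,M}.
   An action component u_n in  M_n ∪ {0}  is an  option 'I_M  (None = 0).
   cache n m  <->  content m is cached at BS n  (i.e. m ∈ M_n).          *)

Definition idx (N M : nat) := ('I_N.+1 * 'I_M)%type.

(* global bound used to encode every Q_{n,m} (and every truncated arrival) *)
Definition Kmax (N M : nat) (Nb : 'I_N.+1 -> 'I_M -> nat) : nat :=
  \max_(i : idx N M) Nb i.1 i.2.

Definition stateT (N M : nat) (Nb : 'I_N.+1 -> 'I_M -> nat) :=
  {ffun idx N M -> 'I_(Kmax Nb).+1}.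

Definition actionT (N M : nat) := {ffun 'I_N.+1 -> option 'I_M}.

(* the state space 𝒬 : Q_{n,m} ∈ {0..N_{n,m}} for m ∈ M_n; the (unused)
   components with m ∉ M_n are fixed to 0 *)
Definition valid_state (N M : nat) (cache : 'I_N.+1 -> 'I_M -> bool)
  (Nb : 'I_N.+1 -> 'I_M -> nat) (Q : stateT Nb) : Prop :=
  forall i : idx N M,
    if cache i.1 i.2 then (Q i <= Nb i.1 i.2)%N else (nat_of_ord (Q i) == 0%N).

(* the feasible action set 𝒰 : u_n ∈ M̃_n and u_0 * Σ_{n∈N+} u_n = 0 *)
Definition feasible (N M : nat) (cache : 'I_N.+1 -> 'I_M -> bool)
  (u : actionT N M) : bool :=
  [forall n, if u n is Some m then cache n m else true] &&
  ((u ord0 == None) || [forall n : 'I_N.+1, (n == ord0) || (u n == None)]).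

Definition u_idle (N M : nat) : actionT N M := [ffun _ => None].

Definition next_val (N M : nat) (cache : 'I_N.+1 -> 'I_M -> bool)
  (Nb : 'I_N.+1 -> 'I_M -> nat) (Q : stateT Nb) (u : actionT N M)
  (A : stateT Nb) (i : idx N M) : nat :=
  let n := i.1 in let m := i.2 in
  if cache n m then
    if n == ord0 then
      minn ((u ord0 != Some m) * Q i + A i
            + \sum_(k : 'I_N.+1 | (k != ord0) && ~~ cache k m) A (k, m))%N
           (Nb n m)
    else
      minn (((u ord0 != Some m) && (u n != Some m)) * Q i + A i)%N (Nb n m)
  else 0%N.

Definition nextQ (N M : nat) (cache : 'I_N.+1 -> 'I_M -> bool)
  (Nb : 'I_N.+1 -> 'I_M -> nat) (Q : stateT Nb) (u : actionT N M)
  (A : stateT Nb) : stateT Nb :=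
  [ffun i => inord (next_val cache Q u A i)].

(* law of the truncated arrival min(A_{n,m}, K) on {0..K}, from the pmf
   a n m : nat -> R of A_{n,m} (which sums to 1) *)
Definition ptrunc (N M : nat) (Nb : 'I_N.+1 -> 'I_M -> nat)
  (a : 'I_N.+1 -> 'I_M -> nat -> R) (i : idx N M) (k : 'I_(Kmax Nb).+1) : R :=
  if (k < Kmax Nb)%N then a i.1 i.2 k
  else (1 - \big[Rplus/0%R]_(j < Kmax Nb) a i.1 i.2 j)%R.

(* E[ V(Q') ] : expectation over the (mutually independent) arrivals *)
Definition EV (N M : nat) (cache : 'I_N.+1 -> 'I_M -> bool)
  (Nb : 'I_N.+1 -> 'I_M -> nat) (a : 'I_N.+1 -> 'I_M -> nat -> R)
  (V : stateT Nb -> R) (Q : stateT Nb) (u : actionT N M) : R :=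
  \big[Rplus/0%R]_(A : stateT Nb)
     ((\big[Rmult/1%R]_(i : idx N M) ptrunc a i (A i))
      * V (nextQ cache Q u A))%R.

Definition dcost (N M : nat) (cache : 'I_N.+1 -> 'I_M -> bool)
  (Nb : 'I_N.+1 -> 'I_M -> nat) (Q : stateT Nb) : R :=
  \big[Rplus/0%R]_(i : idx N M | cache i.1 i.2) INR (Q i).

Definition pcost (N M : nat) (pw : 'I_N.+1 -> 'I_M -> R) (u : actionT N M) : R :=
  \big[Rplus/0%R]_(n : 'I_N.+1) (if u n is Some m then pw n m else 0%R).

Definition gcost (N M : nat) (cache : 'I_N.+1 -> 'I_M -> bool)
  (Nb : 'I_N.+1 -> 'I_M -> nat) (pw : 'I_N.+1 -> 'I_M -> R) (w : R)
  (Q : stateT Nb) (u : actionT N M) : R :=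
  (dcost cache Q + w * pcost pw u)%R.

Definition Jfun (N M : nat) (cache : 'I_N.+1 -> 'I_M -> bool)
  (Nb : 'I_N.+1 -> 'I_M -> nat) (pw : 'I_N.+1 -> 'I_M -> R) (w : R)
  (a : 'I_N.+1 -> 'I_M -> nat -> R) (V : stateT Nb -> R)
  (Q : stateT Nb) (u : actionT N M) : R :=
  (gcost cache pw w Q u + EV cache a V Q u)%R.

(* min over the feasible actions (u_idle is feasible) *)
Definition minU (N M : nat) (cache : 'I_N.+1 -> 'I_M -> bool)
  (f : actionT N M -> R) : R :=
  \big[Rmin/f (u_idle N M)]_(u : actionT N M | feasible cache u) f u.

Fixpoint Vrvi (N M : nat) (cache : 'I_N.+1 -> 'I_M -> bool)
  (Nb : 'I_N.+1 -> 'I_M -> nat) (pw : 'I_N.+1 -> 'I_M -> R) (w : R)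
  (a : 'I_N.+1 -> 'I_M -> nat -> R) (Qd : stateT Nb) (l : nat)
  : stateT Nb -> R :=
  match l with
  | 0 => fun _ => 0%R
  | l'.+1 => fun Q =>
      (minU cache (Jfun cache pw w a (Vrvi cache pw w a Qd l') Q)
       - minU cache (Jfun cache pw w a (Vrvi cache pw w a Qd l') Qd))%R
  end.

Definition DeltaJ (N M : nat) (cache : 'I_N.+1 -> 'I_M -> bool)
  (Nb : 'I_N.+1 -> 'I_M -> nat) (pw : 'I_N.+1 -> 'I_M -> R) (w : R)
  (a : 'I_N.+1 -> 'I_M -> nat -> R) (V : stateT Nb -> R)
  (u v : actionT N M) (Q : stateT Nb) : R :=
  (Jfun cache pw w a V Q u - Jfun cache pw w a V Q v)%R.

Definition noninc_in (N M : nat) (cache : 'I_N.+1 -> 'I_M -> bool)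
  (Nb : 'I_N.+1 -> 'I_M -> nat) (f : stateT Nb -> R) (i : idx N M) : Prop :=
  forall Q Q' : stateT Nb,
    valid_state cache Q -> valid_state cache Q' ->
    (forall j, j != i -> Q' j = Q j) ->
    (Q i <= Q' i)%N -> (f Q' <= f Q)%R.

From HB Require Import structures.
From mathcomp Require Import all_boot.
From Stdlib Require Import Reals Lra.

(* The relative value iterates V_l are nondecreasing in the state: the
   transition is monotone in Q for a fixed arrival vector, the cost d is
   monotone, and both expectation and minimisation over actions preserve
   monotonicity.  Hence so is their limit V.  If u serves (n, m) then the
   next value of Q_{n,m} no longer depends on Q_{n,m}, and no other
   component of the next state ever does; so E[V(Q')] under u is constant in
   Q_{n,m}.  In Delta_{u,v} the costs d(Q) cancel, and what is left is
   -E[V(Q')] under v, which is non-increasing. *)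

Set Implicit Arguments.
Unset Strict Implicit.
Unset Printing Implicit Defensive.

HB.instance Definition Rplus_comLaw :=
  Monoid.isComLaw.Build R 0%R Rplus
    (fun x y z => esym (Rplus_assoc x y z)) Rplus_comm Rplus_0_l.

Lemma Rle_big_sum (I : Type) (r : seq I) (P : pred I) (F G : I -> R) :
  (forall i, P i -> (F i <= G i)%R) ->
  (\big[Rplus/0%R]_(i <- r | P i) F i <= \big[Rplus/0%R]_(i <- r | P i) G i)%R.
Proof.
move=> FG; apply: (big_ind2 (fun x y => x <= y)%R) => //; first lra.
by move=> *; lra.
Qed.

Lemma Rle_big_min (I : Type) (r : seq I) (P : pred I) (F G : I -> R) x y :
  (x <= y)%R -> (forall i, P i -> (F i <= G i)%R) ->
  (\big[Rmin/x]_(i <- r | P i) F i <= \big[Rmin/y]_(i <- r | P i) G i)%R.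
Proof.
move=> xy FG; apply: (big_ind2 (fun x y => x <= y)%R) => // x1 x2 y1 y2 h1 h2.
exact: Rle_trans (Rle_min_compat_r _ _ _ h1) (Rle_min_compat_l _ _ _ h2).
Qed.

Lemma big_ord_sum_f_R0 (f : nat -> R) n :
  \big[Rplus/0%R]_(j < n.+1) f j = sum_f_R0 f n.
Proof.
elim: n => [|n IH]; first by rewrite big_ord_recr big_ord0 /=; lra.
by rewrite big_ord_recr IH.
Qed.

Lemma partial_sum_le_series (f : nat -> R) l K :
  (forall k, 0 <= f k)%R -> infinite_sum f l ->
  (\big[Rplus/0%R]_(j < K) f j <= l)%R.
Proof.
move=> f_ge0 fl.
have partial_le k : (sum_f_R0 f k <= l)%R.
  by apply: growing_ineq fl k => j /=; have := f_ge0 j.+1; lra.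
case: K => [|K]; last by rewrite big_ord_sum_f_R0.
by rewrite big_ord0; have := partial_le 0%N; have := f_ge0 0%N; rewrite /=; lra.
Qed.

Section Transition.

Variables (N M : nat) (cache : 'I_N.+1 -> 'I_M -> bool)
  (Nb : 'I_N.+1 -> 'I_M -> nat).

Definition state_le (Q1 Q2 : stateT Nb) : Prop := forall i, (Q1 i <= Q2 i)%N.

Definition state_mono (V : stateT Nb -> R) : Prop :=
  forall Q1 Q2, valid_state cache Q1 -> valid_state cache Q2 ->
    state_le Q1 Q2 -> (V Q1 <= V Q2)%R.

Definition clears (u : actionT N M) (i : idx N M) : Prop :=
  forall Q Q' A : stateT Nb, next_val cache Q u A i = next_val cache Q' u A i.

Lemma Nb_le_Kmax (i : idx N M) : (Nb i.1 i.2 <= Kmax Nb)%N.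
Proof. exact: (@leq_bigmax _ (fun j : idx N M => Nb j.1 j.2) i). Qed.

Lemma next_val_le_Nb (Q : stateT Nb) u A i :
  (next_val cache Q u A i <= Nb i.1 i.2)%N.
Proof. by rewrite /next_val; case: (cache _ _) => //; case: ifP; rewrite geq_minr. Qed.

Lemma nextQE (Q : stateT Nb) u A i : nextQ cache Q u A i = next_val cache Q u A i :> nat.
Proof.
by rewrite ffunE inordK // ltnS (leq_trans (next_val_le_Nb _ _ _ _) (Nb_le_Kmax _)).
Qed.

Lemma nextQ_valid (Q : stateT Nb) u A : valid_state cache (nextQ cache Q u A).
Proof.
move=> i; rewrite nextQE; have := next_val_le_Nb Q u A i.
by rewrite /next_val; case: (cache _ _).
Qed.

Lemma nextQ_mono (Q1 Q2 : stateT Nb) u A :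
  state_le Q1 Q2 -> state_le (nextQ cache Q1 u A) (nextQ cache Q2 u A).
Proof.
move=> le12 i; rewrite !nextQE /next_val.
case: (cache _ _) => //; case: ifP => _;
by rewrite leq_min geq_minr andbT (leq_trans (geq_minl _ _)) //
   ?leq_add2r leq_mul2l le12 orbT.
Qed.

Lemma nextQ_cleared_eq (u : actionT N M) i (Q Q' A : stateT Nb) :
  clears u i -> (forall j, j != i -> Q' j = Q j) ->
  nextQ cache Q' u A = nextQ cache Q u A.
Proof.
move=> cl_i QQ'; apply/ffunP => j; rewrite !ffunE; congr inord.
by case: (eqVneq j i) => [->|ji]; rewrite ?cl_i // /next_val QQ'.
Qed.

Lemma clears_mbs (u : actionT N M) m :
  cache ord0 m -> u ord0 = Some m -> clears u (ord0, m).
Proof. by move=> c0 u0 Q Q' A; rewrite /next_val /= c0 u0 eqxx. Qed.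

Lemma clears_sbs_by_mbs (u : actionT N M) n m :
  n != ord0 -> u ord0 = Some m -> clears u (n, m).
Proof.
by move=> n0 u0 Q Q' A; rewrite /next_val /= (negbTE n0) u0 eqxx; case: (cache _ _).
Qed.

Lemma clears_sbs (u : actionT N M) n m :
  n != ord0 -> u n = Some m -> clears u (n, m).
Proof.
by move=> n0 un Q Q' A; rewrite /next_val /= (negbTE n0) un eqxx andbF; case: (cache _ _).
Qed.

Lemma dcost_mono (Q1 Q2 : stateT Nb) :
  state_le Q1 Q2 -> (dcost cache Q1 <= dcost cache Q2)%R.
Proof. by move=> le12; apply: Rle_big_sum => i _; apply/le_INR/leP. Qed.

End Transition.

Section ValueMonotone.

Variables (N M : nat) (cache : 'I_N.+1 -> 'I_M -> bool)
  (Nb : 'I_N.+1 -> 'I_M -> nat) (pw : 'I_N.+1 -> 'I_M -> R) (w : R)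
  (a : 'I_N.+1 -> 'I_M -> nat -> R).

Hypothesis a_ge0 : forall n m k, (0 <= a n m k)%R.
Hypothesis a_sum1 : forall n m, infinite_sum (a n m) 1%R.

Lemma ptrunc_ge0 i (k : 'I_(Kmax Nb).+1) : (0 <= ptrunc (Nb:=Nb) a i k)%R.
Proof.
rewrite /ptrunc; case: ifP => _ //.
by have := partial_sum_le_series (Kmax Nb) (a_ge0 i.1 i.2) (a_sum1 i.1 i.2); lra.
Qed.

Lemma arrival_prob_ge0 (A : stateT Nb) :
  (0 <= \big[Rmult/1%R]_(i : idx N M) ptrunc a i (A i))%R.
Proof.
apply: (big_ind (fun x => 0 <= x)%R) => [|x y|i _]; first lra.
  exact: Rmult_le_pos.
exact: ptrunc_ge0.
Qed.

Lemma EV_mono (V : stateT Nb -> R) (Q1 Q2 : stateT Nb) u :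
  state_mono cache V ->
  state_le Q1 Q2 -> (EV cache a V Q1 u <= EV cache a V Q2 u)%R.
Proof.
move=> V_mono le12; apply: Rle_big_sum => A _.
apply: Rmult_le_compat_l; first exact: arrival_prob_ge0.
by apply: V_mono; [apply: nextQ_valid | apply: nextQ_valid | apply: nextQ_mono].
Qed.

Lemma Jfun_mono (V : stateT Nb -> R) (Q1 Q2 : stateT Nb) u :
  state_mono cache V ->
  state_le Q1 Q2 -> (Jfun cache pw w a V Q1 u <= Jfun cache pw w a V Q2 u)%R.
Proof.
move=> V_mono le12; have := dcost_mono cache le12; have := EV_mono u V_mono le12.
by rewrite /Jfun /gcost; lra.
Qed.

Lemma Vrvi_mono (Qd : stateT Nb) l (Q1 Q2 : stateT Nb) :
  state_le Q1 Q2 -> (Vrvi cache pw w a Qd l Q1 <= Vrvi cache pw w a Qd l Q2)%R.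
Proof.
elim: l Q1 Q2 => [|l IH] Q1 Q2 le12 /=; first lra.
apply: Rplus_le_compat_r; apply: Rle_big_min => [|u _];
by apply: Jfun_mono => // P1 P2 _ _; apply: IH.
Qed.

Lemma DeltaJ_noninc (V : stateT Nb -> R) (u v : actionT N M) i :
  state_mono cache V ->
  clears cache Nb u i -> noninc_in cache (DeltaJ cache pw w a V u v) i.
Proof.
move=> V_mono cl_i Q Q' _ _ QQ' le_Qi.
have le_QQ' : state_le Q Q' by move=> j; case: (eqVneq j i) => [->|/QQ'->].
have EVu_const : EV cache a V Q' u = EV cache a V Q u.
  by apply: eq_bigr => A _; rewrite (nextQ_cleared_eq A cl_i QQ').
have := EV_mono v V_mono le_QQ'.
by rewrite /DeltaJ /Jfun /gcost EVu_const; lra.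
Qed.

End ValueMonotone.

Theorem lemma3 (N M : nat) (cache : 'I_N.+1 -> 'I_M -> bool)
  (Nb : 'I_N.+1 -> 'I_M -> nat) (pw : 'I_N.+1 -> 'I_M -> R) (w : R)
  (a : 'I_N.+1 -> 'I_M -> nat -> R) (Qd : stateT Nb) (V : stateT Nb -> R)
  (hcache0 : forall m, cache ord0 m)
  (hNb : forall n m, cache n m -> (0 < Nb n m)%N)
  (hpw : forall n m, cache n m -> (0 <= pw n m)%R)
  (hw : (0 <= w)%R)
  (ha0 : forall n m k, (0 <= a n m k)%R)
  (ha1 : forall n m, infinite_sum (a n m) 1%R)
  (hQd : valid_state cache Qd)
  (hV : forall Q, valid_state cache Q ->
          Un_cv (fun l => Vrvi cache pw w a Qd l Q) (V Q)) :
  forall u v : actionT N M, feasible cache u -> feasible cache v ->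
    (forall m, u ord0 = Some m ->
       noninc_in cache (DeltaJ cache pw w a V u v) (ord0, m) /\
       (forall n, n != ord0 -> cache n m ->
          noninc_in cache (DeltaJ cache pw w a V u v) (n, m))) /\
    (forall n m, n != ord0 -> u n = Some m ->
       noninc_in cache (DeltaJ cache pw w a V u v) (n, m)).
Proof.
move=> u v _ _.
have V_mono : state_mono cache V.
  move=> P1 P2 valid1 valid2 le12; apply: Rle_cv_lim (hV _ valid1) (hV _ valid2) => l.
  exact: Vrvi_mono.
split=> [m u0|n m n0 un]; last exact/DeltaJ_noninc/clears_sbs.
split=> [|n n0 _]; apply: DeltaJ_noninc => //.
  exact: clears_mbs.
exact: clears_sbs_by_mbs.
Qed.
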